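(* Let $A(x)$ be an Alltop function on a finite field $\mathbb{F}_q$ of characteristic $p$. For $a,b\in\mathbb{F}_q$ let $\vec{v}_{ab}=\frac{1}{\sqrt{q}}\big(\omega_p^{\mathrm{tr}(A(x+a)+b(x+a))}\big)_{x\in\mathbb{F}_q}$, and let $C_A=\{\vec{v}_{ab}:a,b\in\mathbb{F}_q\}\cup E$, where $E$ is the standard basis of $\mathbb{C}^q$. Then $C_A$ is a $(q^2+q,q)$ signal set with $I_{\max}(C_A)=\frac{1}{\sqrt{q}}$.
   Context: $\omega_p=e^{2\pi i/p}$ and $\mathrm{tr}$ is the absolute trace from $\mathbb{F}_q$ to $\mathbb{F}_p$. For $f:\mathbb{F}_q\to\mathbb{F}_q$, $\Delta_{f,a}(x)=f(x+a)-f(x)$; $f$ is planar if $x\mapsto\Delta_{f,a}(x)$ is a bijection for all $a\neq0$; $A$ is an Alltop function if $\Delta_{A,a}$ is planar for all $a\neq0$. An $(N,K)$ signal set is a set of $N$ unit vectors $\{\vec{v}_i\}$ in $\mathbb{C}^K$, and $I_{\max}=\max_{i<j}|\langle\vec{v}_i|\vec{v}_j\rangle|$. *)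

From mathcomp Require Import all_boot all_algebra all_field.
From mathcomp Require Import all_classical all_reals all_analysis.
From mathcomp.real_closed Require Export complex.
Set Implicit Arguments. Unset Strict Implicit. Unset Printing Implicit Defensive.
Import GRing.Theory Num.Theory.
Local Open Scope ring_scope.
Local Open Scope complex_scope.

Section Defs.
Variable F : finFieldType.

Definition Delta (f : F -> F) (a : F) : F -> F := fun x => f (x + a) - f x.

Definition planar (f : F -> F) : Prop :=
  forall a : F, a != 0 -> bijective (Delta f a).

Definition alltop (A : F -> F) : Prop :=
  forall a : F, a != 0 -> planar (Delta A a).

(* absolute trace F_q -> F_p, q = p^n : tr x = sum_{i<n} x^(p^i) (value in
   the prime subfield, as an element of F) *)
Definition abs_trace (p : nat) (x : F) : F :=
  \sum_(i < logn p #|F|) x ^+ (p ^ i).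

(* the element of Z/p = {0,...,p-1} representing tr x, i.e. k with k%:R = tr x *)
Definition trace_exp (p : nat) (x : F) : nat :=
  oapp (@nat_of_ord p) 0%N [pick k : 'I_p | ((k : nat)%:R : F) == abs_trace p x].

Variable R : realType.

Definition omega (p : nat) : R[i] :=
  cos (2 * pi / p%:R) +i* sin (2 * pi / p%:R).

Definition psi (p : nat) (y : F) : R[i] := omega p ^+ trace_exp p y.

(* vectors of C^q, with coordinates indexed by F *)
Definition inner (u v : F -> R[i]) : R[i] := \sum_(x : F) u x * (v x)^*.

Definition vab (p : nat) (A : F -> F) (a b : F) : F -> R[i] :=
  fun x => (sqrtC (#|F|%:R : R[i]))^-1 * psi p (A (x + a) + b * (x + a)).

Definition std_basis (y : F) : F -> R[i] := fun x => if x == y then 1 else 0.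

Definition CA (p : nat) (A : F -> F) : (F * F)%type + F -> (F -> R[i]) :=
  fun i => match i with
           | inl ab => vab p A ab.1 ab.2
           | inr y => std_basis y
           end.

(* an (N,K) signal set given as an indexed family of vectors in C^K
   (coordinates indexed by F, K = #|F|): the family consists of N distinct
   vectors (injective indexing by a type with N elements), all unit vectors *)
Definition signal_set (I : finType) (N K : nat) (v : I -> F -> R[i]) : Prop :=
  [/\ #|I| = N, #|F| = K, injective v & forall i, inner (v i) (v i) = 1].

Definition is_Imax (I : finType) (v : I -> F -> R[i]) (m : R[i]) : Prop :=
  (forall i j, i != j -> `|inner (v i) (v j)| <= m) /\
  (exists i j, i != j /\ `|inner (v i) (v j)| = m).

End Defs.

From mathcomp Require Import all_boot all_algebra all_field.
From mathcomp Require Import all_classical all_reals all_analysis.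
From mathcomp.real_closed Require Import complex.
From mathcomp Require Import all_order ring.
Set Implicit Arguments. Unset Strict Implicit.
Import Order.TTheory GRing.Theory Num.Theory.
Local Open Scope ring_scope.

(* x |-> omega_p^tr(x) is a nontrivial additive character of F_q with values
on the unit circle, so its sum over F_q vanishes; hence <v_ab, v_ab'> = 0 for
b <> b'. For a <> a' the phase x |-> A(x+a) + b(x+a) - A(x+a') - b'(x+a') has
difference maps Delta_{A,a-a'}(. + a') + constant, which are bijections since A
is Alltop, and a character sum over such a planar phase has modulus sqrt q.
Finally |<v_ab, e_y>| = |v_ab(y)| = 1/sqrt q, so the bound is attained. *)

Section RootOfUnity.
Variable R : realType.
Local Open Scope complex_scope.

Lemma cisD (x y : R) :
  (cos x +i* sin x) * (cos y +i* sin y) = cos (x + y) +i* sin (x + y) :> R[i].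
Proof.
rewrite cosD sinD.
have -> : forall a b c d : R, (a +i* b) * (c +i* d) = (a * c - b * d) +i* (a * d + b * c) :> R[i]
  by [].
by congr (_ +i* _); ring.
Qed.

Lemma cisMn (x : R) n : (cos x +i* sin x) ^+ n = cos (x *+ n) +i* sin (x *+ n) :> R[i].
Proof.
elim: n => [|n IHn]; first by rewrite expr0 !mulr0n cos0 sin0.
by rewrite exprS IHn cisD mulrS.
Qed.

Lemma omega_expp p : (0 < p)%N -> omega R p ^+ p = 1.
Proof.
move=> p_gt0; rewrite /omega cisMn -(mulr_natr (2 * pi / p%:R)) divfK ?pnatr_eq0 -?lt0n //.
by rewrite [2 * pi]mulrC mulr_natr cos2pi sin2pi.
Qed.

Lemma omega_neq1 p : (1 < p)%N -> omega R p != 1.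
Proof.
move=> p_gt1; apply/eqP => /(congr1 (@complex.Re R)) /=.
have p_pos : (0 : R) < p%:R by rewrite ltr0n ltnW.
have angle_gt0 : (0 : R) < 2 * pi / p%:R by rewrite divr_gt0 // mulr_gt0 // pi_gt0.
have angle_le_pi : 2 * pi / p%:R <= pi :> R.
  by rewrite ler_pdivrMr // mulrC ler_pM2l ?pi_gt0 // (ler_nat R 2 p).
have := @ltr_cos R 0 (2 * pi / p%:R).
rewrite !in_itv /= lexx pi_ge0 (ltW angle_gt0) angle_le_pi cos0 angle_gt0.
by move=> /(_ isT isT) + cos1; rewrite cos1 ltxx.
Qed.

Lemma omega_prim p : prime p -> p.-primitive_root (omega R p).
Proof.
move=> p_prime; have [m prim_m m_dvd_p] := prim_order_exists (prime_gt0 p_prime)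
  (omega_expp (prime_gt0 p_prime)).
have /orP[/eqP m1|/eqP m_eq_p] := (primeP p_prime).2 m m_dvd_p; last by move: prim_m; rewrite m_eq_p.
move: prim_m; rewrite m1 => /prim_expr_order; rewrite expr1 => /eqP.
by rewrite (negPf (omega_neq1 (prime_gt1 p_prime))).
Qed.

End RootOfUnity.

Section PrimeCharacteristic.
Variables (F : finFieldType) (p : nat).
Hypothesis pcharFp : p \in [pchar F].
Let p_prime := pcharf_prime pcharFp.

Lemma natr_eq_pchar m n : (m%:R == n%:R :> F) = (m == n %[mod p]).
Proof.
wlog le_nm : m n / (n <= m)%N.
  by move=> IH; case: (leqP n m) => [|/ltnW] /IH; rewrite 1?eq_sym // => ->; rewrite eq_sym.
by rewrite eqn_mod_dvd // (dvdn_pcharf pcharFp) natrB // subr_eq0.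
Qed.

Lemma card_pchar : #|F| = (p ^ logn p #|F|)%N.
Proof. exact: card_pprimeChar pcharFp. Qed.

Lemma exprD_pchar_pow (x y : F) i : (x + y) ^+ (p ^ i) = x ^+ (p ^ i) + y ^+ (p ^ i).
Proof. by apply: exprDn_pchar; rewrite (eq_pnat _ (pcharf_eq pcharFp)) pnatX pnat_id. Qed.

Lemma abs_traceD (x y : F) : abs_trace p (x + y) = abs_trace p x + abs_trace p y.
Proof. by rewrite /abs_trace -big_split; apply: eq_bigr => i _; rewrite exprD_pchar_pow. Qed.

(* Raising to the p-th power shifts the Frobenius orbit, and x ^+ (p ^ n) = x. *)
Lemma abs_trace_expp (x : F) : abs_trace p x ^+ p = abs_trace p x.
Proof.
rewrite /abs_trace -(pFrobenius_autE pcharFp) rmorph_sum /=.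
under eq_bigr do rewrite (pFrobenius_autE pcharFp) -exprM -expnSr.
set n := logn p #|F|.
have xpn : x ^+ (p ^ n) = x ^+ (p ^ 0) by rewrite expn0 expr1 /n -card_pchar expf_card.
apply: (@addIr _ (x ^+ (p ^ 0))).
transitivity (\sum_(i < n.+1) x ^+ (p ^ i)); first by rewrite big_ord_recl addrC.
by rewrite big_ord_recr xpn.
Qed.

(* 'X^p - 'X has at most p roots, and the p elements k%:R (k < p) are roots. *)
Lemma expp_fixed_natr (x : F) : x ^+ p = x -> exists k : 'I_p, (k : nat)%:R = x.
Proof.
move=> xp; have [k /eqP natr_k|x_notin] := pickP (fun k : 'I_p => (k : nat)%:R == x).
  by exists k.
pose P : {poly F} := 'X^p - 'X.
have size_P : size P = p.+1.
  by rewrite /P size_polyDl ?size_polyXn // size_polyN size_polyX ltnS prime_gt1.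
have P_neq0 : P != 0 by rewrite -size_poly_eq0 size_P.
have root_P z : z ^+ p = z -> root P z by move=> zp; rewrite /root /P !hornerE zp subrr.
have natr_inj : injective (fun k : 'I_p => (k : nat)%:R : F).
  move=> i j /eqP; rewrite natr_eq_pchar !modn_small // => /eqP; exact: val_inj.
suff : (p.+1 < size P)%N by rewrite size_P ltnn.
have -> : p.+1 = size (x :: [seq (val k)%:R | k : 'I_p]) by rewrite /= size_map size_enum_ord.
apply: max_poly_roots P_neq0 _ _ => /=.
- rewrite root_P //; apply/allP => _ /mapP[k _ ->]; apply: root_P.
  by rewrite -(pFrobenius_autE pcharFp) rmorph_nat.
- rewrite map_inj_uniq ?enum_uniq // andbT.
  by apply/mapP => -[k _ /esym/eqP]; rewrite x_notin.
Qed.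

Lemma trace_expP (x : F) : (trace_exp p x < p)%N /\ (trace_exp p x)%:R = abs_trace p x.
Proof.
rewrite /trace_exp; case: pickP => [k /eqP <-|no_k] /=; first by split.
have [k natr_k] := expp_fixed_natr (abs_trace_expp x).
by have := no_k k; rewrite natr_k eqxx.
Qed.

Lemma trace_expD (x y : F) :
  trace_exp p (x + y) = ((trace_exp p x + trace_exp p y) %% p)%N.
Proof.
have [lt_xy natr_xy] := trace_expP (x + y).
have [_ natr_x] := trace_expP x; have [_ natr_y] := trace_expP y.
apply/eqP; rewrite -[trace_exp p (x + y)](modn_small lt_xy) -natr_eq_pchar.
by rewrite natrD natr_xy natr_x natr_y abs_traceD.
Qed.

(* The trace is a polynomial function of degree p ^ (n - 1) < #|F|. *)
Lemma abs_trace_neq0 : exists t : F, abs_trace p t != 0.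
Proof.
have p_gt1 := prime_gt1 p_prime.
case def_n: (logn p #|F|) => [|m].
  by have := finNzRing_gt1 F; rewrite card_pchar def_n.
apply/existsP; apply: contraT => /existsPn trace0.
pose P : {poly F} := \sum_(i < m.+1) 'X^(p ^ i).
have coefP1 : P`_1 = 1.
  rewrite coef_sum big_ord_recl /= coefXn expn0 eqxx big1 ?addr0 // => i _.
  by rewrite coefXn eqn_leq andbC leqNgt (@leq_ltn_trans (p ^ 0)) // ltn_exp2l.
have P_neq0 : P != 0 by apply: contra_eq_neq coefP1 => ->; rewrite coef0 eq_sym oner_neq0.
have roots_P : all (root P) (enum F).
  apply/allP => z _; rewrite /root horner_sum; apply/eqP.
  have /negPn/eqP trace_z := trace0 z; rewrite -[RHS]trace_z /abs_trace def_n.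
  by apply: eq_bigr => i _; rewrite hornerXn.
suff : (size P <= #|F|)%N by rewrite leqNgt cardE (max_poly_roots P_neq0 roots_P (enum_uniq F)).
apply: (leq_trans (size_sum _ _ _)); apply/bigmax_leqP => i _.
by rewrite size_polyXn card_pchar def_n ltn_exp2l.
Qed.

End PrimeCharacteristic.

Section AdditiveCharacter.
Variables (F : finFieldType) (C : numClosedFieldType) (chi : F -> C).
Hypotheses (chiD : {morph chi : x y / x + y >-> x * y}) (norm_chi : forall x, `|chi x| = 1).

Lemma chi_neq0 x : chi x != 0.
Proof. by rewrite -normr_eq0 norm_chi oner_neq0. Qed.

Lemma chi0 : chi 0 = 1.
Proof. by apply: (mulfI (chi_neq0 0)); rewrite -chiD addr0 mulr1. Qed.

Lemma conj_chi x : (chi x)^* = chi (- x).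
Proof.
apply: (mulfI (chi_neq0 x)).
by rewrite -normCK norm_chi expr1n -chiD subrr chi0.
Qed.

Hypothesis chi_nontrivial : exists t, chi t != 1.

(* Translating the summation variable by t multiplies the sum by chi t != 1. *)
Lemma sum_chi : \sum_x chi x = 0.
Proof.
have [t chi_t_neq1] := chi_nontrivial.
have shift : \sum_x chi x = chi t * \sum_x chi x.
  rewrite mulr_sumr (reindex_inj (addIr t)) /=.
  by apply: eq_bigr => y _; rewrite chiD mulrC.
have : (chi t - 1) * \sum_x chi x = 0 by rewrite mulrBl -shift mul1r subrr.
by move/eqP; rewrite mulf_eq0 subr_eq0 (negPf chi_t_neq1) => /eqP.
Qed.

Lemma sum_chi_inj (g : F -> F) : injective g -> \sum_x chi (g x) = 0.
Proof. by move=> g_inj; rewrite -(reindex_inj g_inj (P := xpredT) (F := chi)) sum_chi. Qed.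

(* Expanding |S|^2 as a double sum and substituting y = x + e, the inner sums
   over x with e <> 0 vanish, leaving the #|F| terms with e = 0. *)
Lemma norm_sum_chi_planar (g : F -> F) :
  (forall e, e != 0 -> injective (Delta g e)) ->
  `|\sum_x chi (g x)| = sqrtC #|F|%:R.
Proof.
move=> Delta_inj; rewrite -[LHS]sqrCK // normCK rmorph_sum mulr_suml.
have -> : \sum_x chi (g x) * \sum_y (chi (g y))^* = \sum_e \sum_x chi (- Delta g e x).
  rewrite exchange_big; apply: eq_bigr => y _; rewrite mulr_sumr.
  rewrite (reindex_inj (addrI y)); apply: eq_bigr => e _.
  by rewrite conj_chi -chiD /Delta opprB addrC.
rewrite (bigD1 0) //= [X in _ + X]big1 ?addr0; last first.
  by move=> e e_neq0; apply: sum_chi_inj => x y /oppr_inj /(Delta_inj e e_neq0).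
under eq_bigr do rewrite /Delta addr0 subrr oppr0 chi0.
by rewrite sumr_const.
Qed.

End AdditiveCharacter.

Section TraceCharacter.
Variables (R : realType) (F : finFieldType) (p : nat).
Hypothesis pcharFp : p \in [pchar F].
Let p_prime := pcharf_prime pcharFp.
Local Notation psi := (@psi F R p).

Lemma psiD : {morph psi : x y / x + y >-> x * y}.
Proof.
move=> x y; rewrite /psi (trace_expD pcharFp) -exprD.
by rewrite (expr_mod _ (omega_expp R (prime_gt0 p_prime))).
Qed.

Lemma norm_psi x : `|psi x| = 1.
Proof.
have norm_omega : `|omega R p| = 1.
  apply/eqP; rewrite -(pexpr_eq1 (n := p)) ?prime_gt0 // -normrX.
  by rewrite omega_expp ?prime_gt0 ?normr1.
by rewrite /psi normrX norm_omega expr1n.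
Qed.

Lemma psi_nontrivial : exists t, psi t != 1.
Proof.
have [t trace_t_neq0] := abs_trace_neq0 pcharFp; exists t.
have [_ natr_t] := trace_expP pcharFp t.
rewrite /psi -(prim_order_dvd (omega_prim R p_prime)).
by rewrite (dvdn_pcharf pcharFp) natr_t.
Qed.

End TraceCharacter.

Section StandardBasis.
Variables (R : realType) (F : finFieldType).

Lemma inner_std_basisr (u : F -> R[i]) y : inner u (std_basis R y) = u y.
Proof.
rewrite /inner (bigD1 y) //= big1 ?addr0 => [|x /negPf x_neq_y].
  by rewrite /std_basis eqxx rmorph1 mulr1.
by rewrite /std_basis x_neq_y rmorph0 mulr0.
Qed.

Lemma inner_std_basisl (u : F -> R[i]) y : inner (std_basis R y) u = (u y)^*.
Proof.
rewrite /inner (bigD1 y) //= big1 ?addr0 => [|x /negPf x_neq_y].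
  by rewrite /std_basis eqxx mul1r.
by rewrite /std_basis x_neq_y mul0r.
Qed.

End StandardBasis.

Section AlltopSignalSet.
Variables (R : realType) (F : finFieldType) (p : nat) (A : F -> F).
Hypothesis pcharFp : p \in [pchar F].
Local Notation psi := (@psi F R p).
Local Notation v := (vab R p A).
Local Notation q := (#|F|%:R : R[i]).

Definition phase (a b x : F) := A (x + a) + b * (x + a).

Lemma natr_card_gt0 : 0 < q.
Proof. by rewrite ltr0n; case: #|F| (finNzRing_gt1 F). Qed.

Lemma invsqrt_card_gt0 : 0 < (sqrtC q)^-1.
Proof. by rewrite invr_gt0 sqrtC_gt0 natr_card_gt0. Qed.

Lemma norm_vab a b x : `|v a b x| = (sqrtC q)^-1.
Proof. by rewrite normrM norm_psi // mulr1 gtr0_norm ?invsqrt_card_gt0. Qed.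

Lemma inner_vab a b a' b' :
  inner (v a b) (v a' b') = q^-1 * \sum_x psi (phase a b x - phase a' b' x).
Proof.
have conj_c : ((sqrtC q)^-1)^* = (sqrtC q)^-1 by rewrite geC0_conj ?ltW ?invsqrt_card_gt0.
rewrite /inner mulr_sumr; apply: eq_bigr => x _.
rewrite rmorphM /= conj_c (conj_chi (psiD R pcharFp) (norm_psi R pcharFp)).
by rewrite mulrACA -invfM -expr2 sqrtCK -psiD.
Qed.

Lemma inner_vab_diag a b : inner (v a b) (v a b) = 1.
Proof.
rewrite inner_vab; under eq_bigr do rewrite subrr (chi0 (psiD R pcharFp) (norm_psi R pcharFp)).
by rewrite sumr_const mulVf ?gt_eqF ?natr_card_gt0.
Qed.

Lemma inner_vab_same_shift a b b' : b != b' -> inner (v a b) (v a b') = 0.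
Proof.
move=> b_neq_b'; rewrite inner_vab.
have phase_diff x : phase a b x - phase a b' x = (b - b') * (x + a) by rewrite /phase; ring.
under eq_bigr do rewrite phase_diff.
rewrite (sum_chi_inj (psiD R pcharFp) (psi_nontrivial R pcharFp)) ?mulr0 //.
by move=> x y /(mulfI _) /addIr; apply; rewrite subr_eq0.
Qed.

Lemma Delta_phase_diff a a' b b' e x :
  Delta (fun y => phase a b y - phase a' b' y) e x
  = Delta (Delta A (a - a')) e (x + a') + (b - b') * e.
Proof.
rewrite /Delta /phase.
have -> : x + a' + e + (a - a') = x + e + a by ring.
have -> : x + a' + (a - a') = x + a by ring.
have -> : x + a' + e = x + e + a' by ring.
ring.
Qed.

Hypothesis alltopA : alltop A.

Lemma norm_inner_vab_shift a a' b b' : a != a' ->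
  `|inner (v a b) (v a' b')| = (sqrtC q)^-1.
Proof.
move=> a_neq_a'; rewrite inner_vab normrM.
rewrite (norm_sum_chi_planar (psiD R pcharFp) (norm_psi R pcharFp) (psi_nontrivial R pcharFp)).
  rewrite ger0_norm ?invr_ge0 ?ltW ?natr_card_gt0 //.
  by rewrite -{1}(sqrtCK q) expr2 invfM -mulrA mulVf ?mulr1 // gt_eqF ?sqrtC_gt0 ?natr_card_gt0.
have a_diff_neq0 : a - a' != 0 by rewrite subr_eq0.
move=> e e_neq0 x y; rewrite !Delta_phase_diff => /addIr.
by move=> /(bij_inj (alltopA a_diff_neq0 e_neq0)) /addIr.
Qed.

Lemma invsqrt_card_lt1 : (sqrtC q)^-1 < 1.
Proof.
rewrite invf_lt1 ?sqrtC_gt0 ?natr_card_gt0 // -(expr_gt1 (n := 2)) ?sqrtC_ge0 ?ltW ?natr_card_gt0 //.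
by rewrite sqrtCK ltr1n finNzRing_gt1.
Qed.

Lemma inner_CA_diag i : inner (CA R p A i) (CA R p A i) = 1.
Proof.
by case: i => [[a b]|y] /=; rewrite ?inner_vab_diag // inner_std_basisr /std_basis eqxx.
Qed.

Lemma norm_inner_CA_le i j : i != j ->
  `|inner (CA R p A i) (CA R p A j)| <= (sqrtC q)^-1.
Proof.
have c_ge0 := ltW invsqrt_card_gt0.
case: i j => [[a b]|y] [[a' b']|y'] /= i_neq_j.
- have [a_eq_a'|a_neq_a'] := eqVneq a a'; last by rewrite norm_inner_vab_shift.
  rewrite -a_eq_a' inner_vab_same_shift ?normr0 //.
  by apply: contra i_neq_j => /eqP b_eq_b'; rewrite a_eq_a' b_eq_b'.
- by rewrite inner_std_basisr norm_vab.
- by rewrite inner_std_basisl norm_conjC norm_vab.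
- have y_neq_y' : y' != y by apply: contra i_neq_j => /eqP ->.
  by rewrite inner_std_basisr /std_basis (negPf y_neq_y') normr0.
Qed.

Lemma CA_inj : injective (CA R p A).
Proof.
move=> i j CA_ij; apply/eqP; apply: contraT => i_neq_j.
have := norm_inner_CA_le i_neq_j.
by rewrite CA_ij inner_CA_diag normr1 => /(lt_le_trans invsqrt_card_lt1); rewrite ltxx.
Qed.

End AlltopSignalSet.

Theorem corollary1 (R : realType) (F : finFieldType) (p : nat) (A : F -> F) :
  prime p -> p \in [pchar F] -> alltop A ->
  signal_set (#|F| ^ 2 + #|F|)%N #|F| (CA R p A) /\
  is_Imax (CA R p A) (sqrtC (#|F|%:R : R[i]))^-1.
Proof.
(* primality of p already follows from p \in [pchar F] *)
move=> _ pcharFp alltopA; split.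
  split; [by rewrite card_sum card_prod mulnn | by [] | exact: CA_inj pcharFp alltopA |].
  exact: inner_CA_diag pcharFp.
split; first exact: norm_inner_CA_le pcharFp alltopA.
by exists (inl (0, 0)), (inr 0); rewrite /= inner_std_basisr norm_vab.
Qed.
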